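(* Let $\mathbf A\in\mathbb R^{m\times n}$ have full column rank ($\operatorname{rank}\mathbf A=n$), with smallest singular value $\sigma_n(\mathbf A)>0$, and let $\mathbf b\in\mathbb R^m$ be such that $\mathbf A\mathbf x=\mathbf b$ is consistent (so $\mathbf A^\dagger\mathbf b$ is its unique solution). Fix a row partition $\{\mathcal I_1,\dots,\mathcal I_s\}$ of $[m]$ and a column partition $\{\mathcal J_1,\dots,\mathcal J_t\}$ of $[n]$, let $\beta=\max_{(\mathcal I,\mathcal J)\in\mathcal P}\|\mathbf A_{\mathcal I,\mathcal J}\|_2^2/\|\mathbf A_{\mathcal I,\mathcal J}\|_F^2$, and assume $0<\alpha<2/(t\beta)$. Let $\mathbf x^0\in\mathbb R^n$ be arbitrary and let $\mathbf x^k$ be the $k$th iterate of the doubly stochastic block Gauss--Seidel (DSBGS) algorithm described in the context. Then for every $k\ge0$, $$\mathbb E\big[\|\mathbf x^k-\mathbf A^\dagger\mathbf b\|_2^2\big]\le\Big(1-\frac{(2\alpha-t\beta\alpha^2)\sigma_n^2(\mathbf A)}{\|\mathbf A\|_F^2}\Big)^k\|\mathbf x^0-\mathbf A^\dagger\mathbf b\|_2^2 .$$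
   Context: Notation: $\mathbf A^\dagger$ is the Moore--Penrose pseudoinverse, $\|\cdot\|_F$ the Frobenius norm, $\|\cdot\|_2$ the Euclidean norm for vectors and spectral norm (largest singular value) for matrices. For $\mathcal I\subseteq[m]=\{1,\dots,m\}$ and $\mathcal J\subseteq[n]$, $\mathbf A_{\mathcal I,\mathcal J}$ is the submatrix of $\mathbf A$ with rows indexed by $\mathcal I$ and columns indexed by $\mathcal J$; $\mathbf I_{:,\mathcal J}$ denotes the columns of the identity matrix (of the appropriate order) indexed by $\mathcal J$. DSBGS algorithm: the sets $\mathcal I_1,\dots,\mathcal I_s$ are nonempty, pairwise disjoint with union $[m]$, and $\mathcal J_1,\dots,\mathcal J_t$ are nonempty, pairwise disjoint with union $[n]$; $\mathcal P=\{\mathcal I_1,\dots,\mathcal I_s\}\times\{\mathcal J_1,\dots,\mathcal J_t\}$ (in the definition of $\beta$ the maximum is over blocks with $\mathbf A_{\mathcal I,\mathcal J}\neq 0$). Given $\alpha>0$ and $\mathbf x^0$, for $k=1,2,\dots$: pick $(\mathcal I,\mathcal J)\in\mathcal P$ (independently of previous choices) with probability $\|\mathbf A_{\mathcal I,\mathcal J}\|_F^2/\|\mathbf A\|_F^2$, and set $$\mathbf x^k=\mathbf x^{k-1}-\alpha\,\frac{\mathbf I_{:,\mathcal J}(\mathbf A_{\mathcal I,\mathcal J})^{T}(\mathbf I_{:,\mathcal I})^{T}}{\|\mathbf A_{\mathcal I,\mathcal J}\|_F^2}\,(\mathbf A\mathbf x^{k-1}-\mathbf b).$$ The expectation $\mathbb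 E$ is over the random choices of the blocks. *)

From HB Require Import structures.
From mathcomp Require Import all_boot all_order all_algebra.
From mathcomp Require Import classical_sets reals.
Set Implicit Arguments. Unset Strict Implicit. Unset Printing Implicit Defensive.
Import Order.TTheory GRing.Theory Num.Theory.
Local Open Scope ring_scope.
Local Open Scope classical_set_scope.

Section DSBGS.
Variable R : realType.

Definition vnorm (k : nat) (x : 'cV[R]_k) : R :=
  Num.sqrt (\sum_(i < k) x i 0 ^+ 2).

Definition frob (p q : nat) (M : 'M[R]_(p, q)) : R :=
  Num.sqrt (\sum_(i < p) \sum_(j < q) M i j ^+ 2).

Definition sigma_max (p q : nat) (M : 'M[R]_(p, q)) : R :=
  Num.sqrt (sup [set a : R | eigenvalue (M^T *m M) a]).

Definition sigma_min (p q : nat) (M : 'M[R]_(p, q)) : R :=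
  Num.sqrt (inf [set a : R | eigenvalue (M^T *m M) a]).

Definition is_pinv (p q : nat) (A : 'M[R]_(p, q)) (X : 'M[R]_(q, p)) : Prop :=
  [/\ A *m X *m A = A, X *m A *m X = X,
      (A *m X)^T = A *m X & (X *m A)^T = X *m A].

(* Submatrix A_{I,J}, rows/columns listed in increasing order. *)
Definition submx (m n : nat) (A : 'M[R]_(m, n)) (I : {set 'I_m}) (J : {set 'I_n})
  : 'M[R]_(#|I|, #|J|) :=
  \matrix_(i < #|I|, j < #|J|) A (enum_val i) (enum_val j).

Definition idcols (n : nat) (J : {set 'I_n}) : 'M[R]_(n, #|J|) :=
  \matrix_(i < n, k < #|J|) (i == enum_val k)%:R.

Definition block m n := ({set 'I_m} * {set 'I_n})%type.

Definition in_blocks m n (Pr : {set {set 'I_m}}) (Pc : {set {set 'I_n}})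
  (p : block m n) : bool := (p.1 \in Pr) && (p.2 \in Pc).

Definition beta m n (A : 'M[R]_(m, n)) (Pr : {set {set 'I_m}})
  (Pc : {set {set 'I_n}}) : R :=
  \big[Num.max/0]_(p : block m n | in_blocks Pr Pc p && (submx A p.1 p.2 != 0))
     (sigma_max (submx A p.1 p.2) ^+ 2 / frob (submx A p.1 p.2) ^+ 2).

Definition block_prob m n (A : 'M[R]_(m, n)) (p : block m n) : R :=
  frob (submx A p.1 p.2) ^+ 2 / frob A ^+ 2.

Definition dsbgs_step m n (A : 'M[R]_(m, n)) (b : 'cV[R]_m) (alpha : R)
  (x : 'cV[R]_n) (p : block m n) : 'cV[R]_n :=
  x - (alpha / frob (submx A p.1 p.2) ^+ 2) *:
      (idcols p.2 *m (submx A p.1 p.2)^T *m (idcols p.1)^T *m (A *m x - b)).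

Definition dsbgs_iter m n (A : 'M[R]_(m, n)) (b : 'cV[R]_m) (alpha : R)
  (x0 : 'cV[R]_n) (w : seq (block m n)) : 'cV[R]_n :=
  foldl (dsbgs_step A b alpha) x0 w.

Definition expected_sq_err m n (A : 'M[R]_(m, n)) (b : 'cV[R]_m) (alpha : R)
  (Pr : {set {set 'I_m}}) (Pc : {set {set 'I_n}}) (x0 xs : 'cV[R]_n) (k : nat) : R :=
  \sum_(w : k.-tuple (block m n) | all (in_blocks Pr Pc) w)
     (\prod_(p <- w) block_prob A p) * vnorm (dsbgs_iter A b alpha x0 w - xs) ^+ 2.

End DSBGS.

(* Write e = x - x* for the error and r = A e for the residual.  A step with block
   (I, J) and c = alpha / ||A_IJ||_F^2 turns ||e||^2 into
   ||e||^2 - 2 c <r_I, A_IJ e_J> + c^2 ||A_IJ^T r_I||^2, where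
   ||A_IJ^T r_I||^2 <= beta ||A_IJ||_F^2 ||r_I||^2.  Averaging with the weights
   ||A_IJ||_F^2 / ||A||_F^2, the cross terms add up to ||r||^2 and, as every row
   block is paired with all t column blocks, the quadratic terms to at most
   t beta ||r||^2.  With ||r||^2 >= sigma_n^2 ||e||^2 one step contracts the expected
   squared error by the stated factor, and independence of the choices iterates this.
   The bounds by sigma_max and sigma_n are Rayleigh-quotient bounds: the supremum d of
   the Rayleigh quotient of a symmetric S is an eigenvalue, for otherwise d - S would
   be positive semidefinite and invertible, hence coercive, which keeps the quotient
   away from d. *)

From Pilot Require Import Defs.
From HB Require Import structures.
From mathcomp Require Import all_boot all_order all_algebra.
From mathcomp Require Import classical_sets reals.
From mathcomp Require Import ring lra.
Set Implicit Arguments. Unset Strict Implicit. Unset Printing Implicit Defensive.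
Import Order.TTheory GRing.Theory Num.Theory.
Local Open Scope ring_scope.

Section InnerProduct.
Variable R : realType.

Definition dot n (x y : 'cV[R]_n) : R := \sum_i x i 0 * y i 0.

Lemma dotC n (x y : 'cV[R]_n) : dot x y = dot y x.
Proof. by apply: eq_bigr => i _; rewrite mulrC. Qed.

Lemma dotDl n (x y z : 'cV[R]_n) : dot (x + y) z = dot x z + dot y z.
Proof. by rewrite /dot -big_split; apply: eq_bigr => i _; rewrite !mxE mulrDl. Qed.

Lemma dotZl n a (x z : 'cV[R]_n) : dot (a *: x) z = a * dot x z.
Proof. by rewrite /dot mulr_sumr; apply: eq_bigr => i _; rewrite !mxE mulrA. Qed.

Lemma dotBl n (x y z : 'cV[R]_n) : dot (x - y) z = dot x z - dot y z.
Proof. by rewrite dotDl -scaleN1r dotZl mulN1r. Qed.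

Lemma dotDr n (x y z : 'cV[R]_n) : dot z (x + y) = dot z x + dot z y.
Proof. by rewrite dotC dotDl !(dotC z). Qed.

Lemma dotZr n a (x z : 'cV[R]_n) : dot z (a *: x) = a * dot z x.
Proof. by rewrite dotC dotZl dotC. Qed.

Lemma dotBr n (x y z : 'cV[R]_n) : dot z (x - y) = dot z x - dot z y.
Proof. by rewrite dotC dotBl !(dotC z). Qed.

Lemma dot0r n (z : 'cV[R]_n) : dot z 0 = 0.
Proof. by rewrite /dot big1 // => i _; rewrite mxE mulr0. Qed.

Lemma dot_subZ n c (e u : 'cV[R]_n) :
  dot (e - c *: u) (e - c *: u) = dot e e - 2 * c * dot e u + c ^+ 2 * dot u u.
Proof. by rewrite !(dotBl, dotBr, dotZl, dotZr) (dotC u e); ring. Qed.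

Lemma dot_mulmx p q (B : 'M[R]_(p, q)) (x : 'cV[R]_p) (y : 'cV[R]_q) :
  dot x (B *m y) = dot (B^T *m x) y.
Proof.
rewrite /dot; under eq_bigr do rewrite mxE mulr_sumr.
under [RHS]eq_bigr do rewrite mxE mulr_suml.
rewrite exchange_big /=; apply: eq_bigr => j _; apply: eq_bigr => i _.
by rewrite mxE mulrCA mulrA.
Qed.

Lemma dotxx_ge0 n (x : 'cV[R]_n) : 0 <= dot x x.
Proof. by apply: sumr_ge0 => i _; rewrite -expr2 sqr_ge0. Qed.

Lemma dotxx_eq0 n (x : 'cV[R]_n) : (dot x x == 0) = (x == 0).
Proof.
apply/idP/eqP => [|->]; last by rewrite dot0r.
rewrite /dot psumr_eq0 => [/allP x0|i _]; last by rewrite -expr2 sqr_ge0.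
apply/matrixP => i j; rewrite ord1 mxE.
by have /implyP/(_ isT) := x0 i (mem_index_enum _); rewrite -expr2 sqrf_eq0 => /eqP.
Qed.

Lemma dotxx_gt0 n (x : 'cV[R]_n) : x != 0 -> 0 < dot x x.
Proof. by move=> x0; rewrite lt_def dotxx_eq0 x0 dotxx_ge0. Qed.

Lemma vnorm_sqr n (x : 'cV[R]_n) : vnorm x ^+ 2 = dot x x.
Proof.
rewrite /vnorm sqr_sqrtr; last by apply: sumr_ge0 => i _; rewrite sqr_ge0.
by apply: eq_bigr => i _; rewrite expr2.
Qed.

Lemma discriminant_le0 (a b c : R) : 0 <= a ->
  (forall t, 0 <= a * t ^+ 2 + 2 * b * t + c) -> b ^+ 2 <= a * c.
Proof.
move=> a_ge0 q_ge0; have [->|b_neq0] := eqVneq b 0.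
  by have := q_ge0 0; rewrite expr0n /= !(mulr0, add0r) => c_ge0; rewrite mulr_ge0.
have [a0|a_neq0] := eqVneq a 0.
  have := q_ge0 (- (c + 1) / (2 * b)); rewrite a0 mul0r add0r.
  have -> : 2 * b * (- (c + 1) / (2 * b)) = - (c + 1) by field.
  lra.
have a_gt0 : 0 < a by rewrite lt_def a_neq0.
have := q_ge0 (- b / a).
have -> : a * (- b / a) ^+ 2 + 2 * b * (- b / a) + c = c - b ^+ 2 / a by field.
by rewrite subr_ge0 ler_pdivrMr // mulrC.
Qed.

Lemma cauchy_schwarz_psd n (P : 'M[R]_n) : P^T = P ->
  (forall z, 0 <= dot z (P *m z)) ->
  forall x y, dot x (P *m y) ^+ 2 <= dot x (P *m x) * dot y (P *m y).
Proof.
move=> P_sym P_psd x y; rewrite mulrC; apply: discriminant_le0 => // t.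
have := P_psd (x + t *: y).
rewrite mulmxDr -scalemxAr !(dotDl, dotDr, dotZl, dotZr).
have -> : dot y (P *m x) = dot x (P *m y) by rewrite dot_mulmx P_sym dotC.
by congr (_ <= _); ring.
Qed.

Lemma cauchy_schwarz n (x y : 'cV[R]_n) : dot x y ^+ 2 <= dot x x * dot y y.
Proof.
have := @cauchy_schwarz_psd n 1%:M (trmx1 _ _) _ x y; rewrite !mul1mx; apply.
by move=> z; rewrite mul1mx dotxx_ge0.
Qed.

Lemma frob_sqr p q (M : 'M[R]_(p, q)) : frob M ^+ 2 = \sum_i \sum_j M i j ^+ 2.
Proof.
by rewrite sqr_sqrtr //; apply: sumr_ge0 => i _; apply: sumr_ge0 => j _; apply: sqr_ge0.
Qed.

Lemma frob_sqr_eq0 p q (M : 'M[R]_(p, q)) : (frob M ^+ 2 == 0) = (M == 0).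
Proof.
rewrite frob_sqr; apply/idP/eqP => [|->]; last first.
  by rewrite big1 // => i _; rewrite big1 // => j _; rewrite mxE expr0n.
rewrite psumr_eq0 => [/allP M0|i _]; last by apply: sumr_ge0 => j _; apply: sqr_ge0.
apply/matrixP => i j; rewrite mxE.
have /implyP/(_ isT) := M0 i (mem_index_enum _).
rewrite psumr_eq0 => [/allP Mi0|j' _]; last exact: sqr_ge0.
by have /implyP/(_ isT) := Mi0 j (mem_index_enum _); rewrite sqrf_eq0 => /eqP.
Qed.

Lemma dot_mulmx_le_frob p q (B : 'M[R]_(p, q)) (x : 'cV[R]_q) :
  dot (B *m x) (B *m x) <= frob B ^+ 2 * dot x x.
Proof.
rewrite frob_sqr mulr_suml; apply: ler_sum => i _.
have -> : (B *m x) i 0 = dot (row i B)^T x.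
  by rewrite mxE; apply: eq_bigr => j _; rewrite !mxE.
have -> : \sum_j B i j ^+ 2 = dot (row i B)^T (row i B)^T.
  by apply: eq_bigr => j _; rewrite !mxE expr2.
by rewrite -expr2; apply: cauchy_schwarz.
Qed.

Lemma rayleigh_le_frob n (S : 'M[R]_n) (x : 'cV[R]_n) :
  dot x (S *m x) <= (1 + frob S ^+ 2) / 2 * dot x x.
Proof.
have := dotxx_ge0 (x - S *m x); rewrite !(dotBl, dotBr) (dotC (S *m x) x).
have := dot_mulmx_le_frob S x; lra.
Qed.

End InnerProduct.

Section Spectral.
Variable R : realType.
Local Open Scope classical_set_scope.

Lemma eigenvalue_unitmx n (S : 'M[R]_n) a : eigenvalue S a = ~~ (S - a%:M \in unitmx).
Proof. by rewrite /eigenvalue /eigenspace kermx_eq0 row_free_unit. Qed.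

Lemma eigenvalueN n (S : 'M[R]_n) a : eigenvalue (- S) a = eigenvalue S (- a).
Proof.
rewrite !eigenvalue_unitmx.
have -> : - S - a%:M = - (S - (- a)%:M) by rewrite raddfN /= opprK opprD.
by rewrite -scaleN1r unitmxZ ?unitrN1.
Qed.

Lemma eigenvalue_rayleigh n (S : 'M[R]_n) a : S^T = S -> eigenvalue S a ->
  exists2 x : 'cV[R]_n, x != 0 & dot x (S *m x) = a * dot x x.
Proof.
move=> S_sym /eigenvalueP [v vS v_neq0]; exists v^T.
  by apply: contra v_neq0 => /eqP v0; rewrite -[v]trmxK v0 linear0.
by rewrite -S_sym -trmx_mul vS linearZ dotZr.
Qed.

Lemma psd_unitmx_coercive n (N : 'M[R]_n) : N^T = N ->
  (forall z, 0 <= dot z (N *m z)) -> N \in unitmx ->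
  exists2 L, 0 <= L & forall x, dot x x <= L * dot x (N *m x).
Proof.
move=> N_sym N_psd N_unit; pose K := (1 + frob N ^+ 2) / 2.
have K_ge0 : 0 <= K by rewrite divr_ge0 // addr_ge0 // sqr_ge0.
exists (frob (invmx N) ^+ 2 * K) => [|x]; first by rewrite mulr_ge0 ?sqr_ge0.
set y := N *m x.
have yy_le : dot y y <= K * dot x (N *m x).
  have cs := cauchy_schwarz_psd N_sym N_psd x y.
  rewrite [dot x (N *m y)]dot_mulmx N_sym in cs.
  have [->|y_neq0] := eqVneq y 0; first by rewrite dot0r mulr_ge0.
  rewrite -(ler_pM2r (dotxx_gt0 y_neq0)) -expr2; apply: le_trans cs _.
  by rewrite mulrAC mulrC ler_wpM2r ?rayleigh_le_frob.
rewrite -{1 2}(mulKmx N_unit x) -/y -mulrA.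
apply: le_trans (dot_mulmx_le_frob _ _) _.
by rewrite ler_wpM2l ?sqr_ge0.
Qed.

Lemma symmetric_top_eigenvalue n (S : 'M[R]_n.+1) : S^T = S ->
  exists2 d, eigenvalue S d & forall x, dot x (S *m x) <= d * dot x x.
Proof.
move=> S_sym.
pose Q : set R :=
  [set r | exists2 x : 'cV_n.+1, x != 0 & r = dot x (S *m x) / dot x x].
have Q_sup : has_sup Q.
  split.
    pose one : 'cV[R]_n.+1 := const_mx 1.
    exists (dot one (S *m one) / dot one one); exists one => //.
    apply/eqP => /matrixP /(_ ord0 ord0).
    by rewrite !mxE => /eqP; rewrite oner_eq0.
  exists ((1 + frob S ^+ 2) / 2) => _ [x x_neq0 ->].
  by rewrite ler_pdivrMr ?rayleigh_le_frob ?dotxx_gt0.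
set d := sup Q.
have d_ub x : dot x (S *m x) <= d * dot x x.
  have [->|x_neq0] := eqVneq x 0; first by rewrite mulmx0 !dot0r mulr0.
  rewrite -ler_pdivrMr ?dotxx_gt0 //; apply: sup_upper_bound => //; by exists x.
exists d => //; rewrite eigenvalue_unitmx; apply/negP => unit_Sd.
pose N := d%:M - S.
have NE z : N *m z = d *: z - S *m z by rewrite mulmxBl mul_scalar_mx.
have N_sym : N^T = N by rewrite linearB /= tr_scalar_mx S_sym.
have N_psd z : 0 <= dot z (N *m z) by rewrite NE dotBr dotZr subr_ge0.
have N_unit : N \in unitmx by rewrite /N -opprB -scaleN1r unitmxZ ?unitrN1.
have [L L_ge0 N_coercive] := psd_unitmx_coercive N_sym N_psd N_unit.
have L1_gt0 : 0 < L + 1 by rewrite ltr_wpDl.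
pose eps := (L + 1)^-1.
have eps_gt0 : 0 < eps by rewrite invr_gt0.
have eps_def : eps * (L + 1) = 1 by rewrite mulVf ?gt_eqF.
have [_ [x x_neq0 ->]] := sup_adherent eps_gt0 Q_sup; rewrite -/d => near_d.
have xx_gt0 := dotxx_gt0 x_neq0.
have := N_coercive x; rewrite NE dotBr dotZr.
rewrite -{1}(divfK (lt0r_neq0 xx_gt0) (dot x (S *m x))).
set q := dot x (S *m x) / dot x x => coercive_x.
have : 1 <= L * (d - q) by rewrite -(ler_pM2r xx_gt0) mul1r -mulrA mulrBl.
move: near_d; rewrite -/q; nra.
Qed.

Lemma symmetric_bottom_eigenvalue n (S : 'M[R]_n.+1) : S^T = S ->
  exists2 d, eigenvalue S d & forall x, d * dot x x <= dot x (S *m x).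
Proof.
move=> S_sym; have NS_sym : (- S)^T = - S by rewrite linearN /= S_sym.
have [d] := symmetric_top_eigenvalue NS_sym; rewrite eigenvalueN => d_eig d_ub.
exists (- d) => // x; have := d_ub x.
by rewrite mulNmx -scaleN1r dotZr mulNr mul1r mulNr lerNl.
Qed.

Lemma rayleigh_le_sup_eigenvalue n (S : 'M[R]_n) : S^T = S ->
  forall x, dot x (S *m x) <= sup [set a | eigenvalue S a] * dot x x.
Proof.
case: n S => [S _ x|n S S_sym x]; first by rewrite /dot !big_ord0 mulr0.
have [d d_eig d_ub] := symmetric_top_eigenvalue S_sym.
apply: le_trans (d_ub x) _; rewrite ler_wpM2r ?dotxx_ge0 //.
apply: ub_le_sup => //; exists d => a /(eigenvalue_rayleigh S_sym) [y y_neq0 yS].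
by rewrite -(ler_pM2r (dotxx_gt0 y_neq0)) -yS.
Qed.

Lemma inf_eigenvalue_le_rayleigh n (S : 'M[R]_n) : S^T = S ->
  forall x, inf [set a | eigenvalue S a] * dot x x <= dot x (S *m x).
Proof.
case: n S => [S _ x|n S S_sym x]; first by rewrite /dot !big_ord0 mulr0.
have [d d_eig d_lb] := symmetric_bottom_eigenvalue S_sym.
apply: le_trans (d_lb x); rewrite ler_wpM2r ?dotxx_ge0 //.
apply: ge_inf => //; exists d => a /(eigenvalue_rayleigh S_sym) [y y_neq0 yS].
by rewrite -(ler_pM2r (dotxx_gt0 y_neq0)) -yS.
Qed.

End Spectral.

Section SingularValues.
Variable R : realType.

Lemma le_sqrtr_sqr (x : R) : x <= Num.sqrt x ^+ 2.
Proof.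
have [x_ge0|x_lt0] := leP 0 x; first by rewrite sqr_sqrtr.
by rewrite ltr0_sqrtr // expr0n /= ltW.
Qed.

Lemma dot_mulmx_gram p q (M : 'M[R]_(p, q)) (u : 'cV[R]_q) :
  dot (M *m u) (M *m u) = dot u ((M^T *m M) *m u).
Proof. by rewrite -mulmxA [RHS]dot_mulmx trmxK. Qed.

Lemma dot_trmx_mul_le_sigma_max p q (M : 'M[R]_(p, q)) (r : 'cV[R]_p) :
  dot (M^T *m r) (M^T *m r) <= sigma_max M ^+ 2 * dot r r.
Proof.
have gram_sym : (M^T *m M)^T = M^T *m M by rewrite trmx_mul trmxK.
rewrite /sigma_max; set u := M^T *m r; set d := sup _.
have [->|u_neq0] := eqVneq u 0; first by rewrite dot0r mulr_ge0 ?sqr_ge0 ?dotxx_ge0.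
apply: (@le_trans _ _ (d * dot r r)); last by rewrite ler_wpM2r ?dotxx_ge0 ?le_sqrtr_sqr.
rewrite -(ler_pM2r (dotxx_gt0 u_neq0)) -expr2.
have := cauchy_schwarz r (M *m u); rewrite dot_mulmx -/u => cs.
apply: le_trans cs _; rewrite mulrAC [leRHS]mulrC ler_wpM2l ?dotxx_ge0 // dot_mulmx_gram.
exact: rayleigh_le_sup_eigenvalue.
Qed.

Lemma sigma_min_sqr_le p q (A : 'M[R]_(p, q)) (e : 'cV[R]_q) :
  0 < sigma_min A -> sigma_min A ^+ 2 * dot e e <= dot (A *m e) (A *m e).
Proof.
rewrite /sigma_min sqrtr_gt0 => /ltW inf_ge0; rewrite sqr_sqrtr // dot_mulmx_gram.
by apply: inf_eigenvalue_le_rayleigh; rewrite trmx_mul trmxK.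
Qed.

End SingularValues.

Section Blocks.
Variable R : realType.

Lemma sum_partition (T : finType) (P : {set {set T}}) (F : T -> R) :
  finset.partition P [set: T] -> \sum_(B in P) \sum_(i in B) F i = \sum_i F i.
Proof.
case/and3P => /eqP P_cover P_triv _.
by rewrite -big_trivIset // P_cover; apply: eq_bigl => i; rewrite finset.in_setT.
Qed.

Lemma sum_partition2 (T1 T2 : finType) (P1 : {set {set T1}}) (P2 : {set {set T2}})
    (g : T1 -> T2 -> R) :
  finset.partition P1 [set: T1] -> finset.partition P2 [set: T2] ->
  \sum_(I in P1) \sum_(J in P2) \sum_(i in I) \sum_(j in J) g i j = \sum_i \sum_j g i j.
Proof.
move=> P1_part P2_part; under eq_bigr do rewrite exchange_big /=.
by rewrite (sum_partition _ P1_part); apply: eq_bigr => i _; apply: sum_partition.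
Qed.

Lemma sum_in_blocks m n (Pr : {set {set 'I_m}}) (Pc : {set {set 'I_n}})
    (G : block m n -> R) :
  \sum_(p | in_blocks Pr Pc p) G p = \sum_(I in Pr) \sum_(J in Pc) G (I, J).
Proof. by rewrite pair_big_dep; apply: eq_big => [[I J]|[I J] _]. Qed.

Lemma trmx_idcols_mul k p (J : {set 'I_k}) (B : 'M[R]_(k, p)) :
  (idcols R J)^T *m B = rowsub enum_val B.
Proof.
have -> : (idcols R J)^T = rowsub enum_val 1%:M.
  by apply/matrixP => l i; rewrite !mxE eq_sym.
by rewrite -rowsubE.
Qed.

Lemma dot_idcols k (J : {set 'I_k}) (v : 'cV[R]_#|J|) :
  dot (idcols R J *m v) (idcols R J *m v) = dot v v.
Proof.
rewrite dot_mulmx_gram trmx_idcols_mul.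
have -> : rowsub enum_val (idcols R J) = 1%:M.
  by apply/matrixP => l l'; rewrite !mxE (inj_eq enum_val_inj).
by rewrite mul1mx.
Qed.

Lemma dot_rowsub k (I : {set 'I_k}) (r : 'cV[R]_k) :
  dot (rowsub (@enum_val _ (mem I)) r) (rowsub enum_val r) = \sum_(i in I) r i 0 ^+ 2.
Proof. by rewrite (big_enum_val (fun i => r i 0 ^+ 2)); apply: eq_bigr => l _; rewrite !mxE. Qed.

Lemma dot_rowsub_submx m n (A : 'M[R]_(m, n)) I J (r : 'cV[R]_m) (e : 'cV[R]_n) :
  dot (rowsub enum_val r) (Defs.submx A I J *m rowsub enum_val e) =
  \sum_(i in I) \sum_(j in J) r i 0 * A i j * e j 0.
Proof.
rewrite (big_enum_val (fun i => \sum_(j in J) r i 0 * A i j * e j 0)).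
apply: eq_bigr => l _; rewrite !mxE (big_enum_val (fun j => r _ 0 * A _ j * e j 0)).
by rewrite mulr_sumr; apply: eq_bigr => l' _; rewrite !mxE mulrA.
Qed.

Lemma frob_submx m n (A : 'M[R]_(m, n)) I J :
  frob (Defs.submx A I J) ^+ 2 = \sum_(i in I) \sum_(j in J) A i j ^+ 2.
Proof.
rewrite frob_sqr (big_enum_val (fun i => \sum_(j in J) A i j ^+ 2)).
apply: eq_bigr => l _; rewrite (big_enum_val (fun j => A _ j ^+ 2)).
by apply: eq_bigr => l' _; rewrite !mxE.
Qed.

Lemma block_prob_ge0 m n (A : 'M[R]_(m, n)) (p : block m n) : 0 <= block_prob A p.
Proof. by rewrite divr_ge0 ?sqr_ge0. Qed.

Lemma beta_ge0 m n (A : 'M[R]_(m, n)) Pr Pc : 0 <= beta A Pr Pc.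
Proof.
rewrite /beta; elim/big_ind: _ => // [x y x_ge0 y_ge0|p _]; first by rewrite le_max x_ge0.
by rewrite divr_ge0 // sqr_ge0.
Qed.

Lemma sigma_max_sqr_le_beta m n (A : 'M[R]_(m, n)) (Pr : {set {set 'I_m}})
    (Pc : {set {set 'I_n}}) I J :
  I \in Pr -> J \in Pc -> Defs.submx A I J != 0 ->
  sigma_max (Defs.submx A I J) ^+ 2 <= beta A Pr Pc * frob (Defs.submx A I J) ^+ 2.
Proof.
move=> IPr JPc M_neq0; have f_gt0 : 0 < frob (Defs.submx A I J) ^+ 2.
  by rewrite lt_def frob_sqr_eq0 M_neq0 sqr_ge0.
rewrite -ler_pdivrMr // /beta (bigD1 (I, J)) /= ?le_max ?lexx //.
by rewrite /in_blocks /= IPr JPc.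
Qed.

End Blocks.

Section OneStep.
Variable R : realType.
Variables (m n : nat) (A : 'M[R]_(m, n)) (b : 'cV[R]_m) (xs : 'cV[R]_n).
Variables (Pr : {set {set 'I_m}}) (Pc : {set {set 'I_n}}) (alpha : R).
Hypothesis Axs : A *m xs = b.
Hypothesis Pr_part : finset.partition Pr [set: 'I_m].
Hypothesis Pc_part : finset.partition Pc [set: 'I_n].

Lemma block_sq_err_le x I J : I \in Pr -> J \in Pc ->
  frob (Defs.submx A I J) ^+ 2 * vnorm (dsbgs_step A b alpha x (I, J) - xs) ^+ 2
  <= frob (Defs.submx A I J) ^+ 2 * dot (x - xs) (x - xs)
     - 2 * alpha * (\sum_(i in I) \sum_(j in J) (A *m (x - xs)) i 0 * A i j * (x - xs) j 0)
     + alpha ^+ 2 * beta A Pr Pc * (\sum_(i in I) (A *m (x - xs)) i 0 ^+ 2).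
Proof.
move=> IPr JPc; rewrite -dot_rowsub_submx -dot_rowsub.
set M := Defs.submx A I J; set e := x - xs; set r := rowsub _ (A *m e).
set T := dot r _; set f := frob M ^+ 2.
have -> : dsbgs_step A b alpha x (I, J) - xs =
          e - (alpha / f) *: (idcols R J *m (M^T *m r)).
  by rewrite /dsbgs_step /= -Axs -mulmxBr /r -trmx_idcols_mul !mulmxA addrAC.
have eu : dot e (idcols R J *m (M^T *m r)) = T.
  by rewrite dot_mulmx trmx_idcols_mul dot_mulmx trmxK dotC.
rewrite vnorm_sqr dot_subZ dot_idcols eu.
have [M0|M_neq0] := eqVneq M 0.
  have f0 : frob (0 : 'M[R]_(#|I|, #|J|)) ^+ 2 = 0 by apply/eqP; rewrite frob_sqr_eq0.
  rewrite /T /f M0 f0 mul0mx dot0r !mul0r mulr0 subr0 add0r.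
  by apply: mulr_ge0; [apply: mulr_ge0; [apply: sqr_ge0 | apply: beta_ge0] | apply: dotxx_ge0].
have f_gt0 : 0 < f by rewrite lt_def frob_sqr_eq0 M_neq0 sqr_ge0.
have V_le := le_trans (dot_trmx_mul_le_sigma_max M r)
  (ler_wpM2r (dotxx_ge0 r) (sigma_max_sqr_le_beta IPr JPc M_neq0)).
have -> : f * (dot e e - 2 * (alpha / f) * T
                + (alpha / f) ^+ 2 * dot (M^T *m r) (M^T *m r)) =
          f * dot e e - 2 * alpha * T + alpha ^+ 2 / f * dot (M^T *m r) (M^T *m r).
  by field; rewrite gt_eqF.
have -> : alpha ^+ 2 * beta A Pr Pc * dot r r =
          alpha ^+ 2 / f * (beta A Pr Pc * f * dot r r) by field; rewrite gt_eqF.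
by rewrite lerD2l ler_wpM2l // divr_ge0 ?sqr_ge0 ?ltW.
Qed.

Lemma mean_sq_err_step_le x :
  \sum_(p | in_blocks Pr Pc p) block_prob A p * vnorm (dsbgs_step A b alpha x p - xs) ^+ 2
  <= dot (x - xs) (x - xs)
     - (2 * alpha - #|Pc|%:R * beta A Pr Pc * alpha ^+ 2) / frob A ^+ 2
       * dot (A *m (x - xs)) (A *m (x - xs)).
Proof.
rewrite sum_in_blocks; set e := x - xs; set r := A *m e; set F := frob A ^+ 2.
have [F0|F_neq0] := eqVneq F 0.
  rewrite F0 invr0 mulr0 mul0r subr0 big1 ?dotxx_ge0 // => I _; rewrite big1 // => J _.
  by rewrite /block_prob -/F F0 invr0 mulr0 mul0r.
have F_gt0 : 0 < F by rewrite lt_def F_neq0 sqr_ge0.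
under eq_bigr do under eq_bigr do rewrite /block_prob /= -/F mulrAC.
under eq_bigr do rewrite -mulr_suml.
rewrite -mulr_suml ler_pdivrMr //.
apply: le_trans.
  by apply: ler_sum => I IPr; apply: ler_sum => J JPc; apply: block_sq_err_le.
have sum_f : \sum_(I in Pr) \sum_(J in Pc) frob (Defs.submx A I J) ^+ 2 = F.
  under eq_bigr do under eq_bigr do rewrite frob_submx.
  by rewrite sum_partition2 // /F frob_sqr.
have sum_T : \sum_(I in Pr) \sum_(J in Pc) \sum_(i in I) \sum_(j in J)
    r i 0 * A i j * e j 0 = dot r r.
  rewrite sum_partition2 //; apply: eq_bigr => i _.
  by rewrite {2}/r mxE mulr_sumr; apply: eq_bigr => j _; rewrite mulrA.
have sum_RI : \sum_(I in Pr) \sum_(J in Pc) \sum_(i in I) r i 0 ^+ 2 = #|Pc|%:R * dot r r.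
  under eq_bigr do rewrite sumr_const.
  by rewrite sumrMnl sum_partition // mulr_natl.
rewrite -/e -/r.
under eq_bigr do rewrite big_split sumrB /= -mulr_suml -!mulr_sumr.
rewrite big_split sumrB /= -mulr_suml -!mulr_sumr sum_f sum_T sum_RI.
rewrite [leRHS]mulrBl [_ / F * _ * F]mulrAC divfK //; lra.
Qed.

Lemma step_factor_ge0 (a c : R) : 0 < a -> a < 2 / c -> 0 <= 2 * a - c * a ^+ 2.
Proof.
move=> a_gt0; have [c_le0 _|c_gt0] := leP c 0; first nra.
by rewrite ltr_pdivlMr // => ac_lt2; nra.
Qed.

Lemma dsbgs_contraction x :
  0 < sigma_min A -> 0 < alpha -> alpha < 2 / (#|Pc|%:R * beta A Pr Pc) ->
  \sum_(p | in_blocks Pr Pc p) block_prob A p * vnorm (dsbgs_step A b alpha x p - xs) ^+ 2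
  <= (1 - (2 * alpha - #|Pc|%:R * beta A Pr Pc * alpha ^+ 2)
            * sigma_min A ^+ 2 / frob A ^+ 2) * vnorm (x - xs) ^+ 2.
Proof.
move=> sigma_gt0 alpha_gt0 alpha_lt; have C_ge0 := step_factor_ge0 alpha_gt0 alpha_lt.
apply: le_trans (mean_sq_err_step_le x) _.
set C := 2 * alpha - _; set F := frob A ^+ 2.
have -> : (1 - C * sigma_min A ^+ 2 / F) * vnorm (x - xs) ^+ 2 =
          dot (x - xs) (x - xs) - C / F * (sigma_min A ^+ 2 * dot (x - xs) (x - xs)).
  by rewrite vnorm_sqr; ring.
by rewrite lerD2l lerN2 ler_wpM2l ?divr_ge0 ?sqr_ge0 ?sigma_min_sqr_le.
Qed.

End OneStep.

Section Expectation.
Variable R : realType.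
Variables (m n : nat) (A : 'M[R]_(m, n)) (b : 'cV[R]_m) (xs : 'cV[R]_n).
Variables (Pr : {set {set 'I_m}}) (Pc : {set {set 'I_n}}) (alpha : R).

Lemma expected_sq_err0 x0 : expected_sq_err A b alpha Pr Pc x0 xs 0 = vnorm (x0 - xs) ^+ 2.
Proof.
rewrite /expected_sq_err (big_pred1 [tuple]) => [|w]; first by rewrite big_nil mul1r.
by rewrite tuple0 /= eqxx.
Qed.

Lemma expected_sq_errS k x0 :
  expected_sq_err A b alpha Pr Pc x0 xs k.+1 =
  \sum_(p | in_blocks Pr Pc p)
     block_prob A p * expected_sq_err A b alpha Pr Pc (dsbgs_step A b alpha x0 p) xs k.
Proof.
rewrite /expected_sq_err.
pose cons_tuple (pw : block m n * k.-tuple (block m n)) := [tuple of pw.1 :: pw.2].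
rewrite (reindex cons_tuple) /=; last first.
  exists (fun w => (thead w, [tuple of behead w])) => [[p w] _|w _].
    by congr (_, _); apply: val_inj.
  by rewrite /cons_tuple /= -tuple_eta.
under [RHS]eq_bigr do rewrite mulr_sumr.
by rewrite [RHS]pair_big_dep /=; apply: eq_bigr => [[p w]] _ /=; rewrite big_cons mulrA.
Qed.

Lemma expected_sq_err_geometric rho :
  (forall x, \sum_(p | in_blocks Pr Pc p)
       block_prob A p * vnorm (dsbgs_step A b alpha x p - xs) ^+ 2
     <= rho * vnorm (x - xs) ^+ 2) ->
  forall k x0, expected_sq_err A b alpha Pr Pc x0 xs k <= rho ^+ k * vnorm (x0 - xs) ^+ 2.
Proof.
move=> contraction; have [rho_lt0|rho_ge0] := ltP rho 0.
  have err0 y : vnorm (y - xs) ^+ 2 = 0.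
    apply/eqP; rewrite eq_le sqr_ge0 andbT -(ler_nM2l rho_lt0) mulr0.
    apply: le_trans (contraction y); apply: sumr_ge0 => p _.
    by rewrite mulr_ge0 ?block_prob_ge0 ?sqr_ge0.
  move=> k x0; rewrite err0 mulr0 /expected_sq_err big1 // => w _.
  by rewrite err0 mulr0.
elim=> [|k IH] x0; first by rewrite expected_sq_err0 expr0 mul1r.
rewrite expected_sq_errS exprSr -mulrA.
apply: le_trans (ler_sum _ (fun p _ => ler_wpM2l (block_prob_ge0 A p) (IH _))) _.
under eq_bigr do rewrite mulrCA.
by rewrite -mulr_sumr ler_wpM2l ?exprn_ge0.
Qed.

End Expectation.

Theorem theorem3 (R : realType) (m n : nat) (A : 'M[R]_(m, n)) (b : 'cV[R]_m)
  (Pr : {set {set 'I_m}}) (Pc : {set {set 'I_n}}) (alpha : R)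
  (x0 : 'cV[R]_n) (Adag : 'M[R]_(n, m)) :
  \rank A = n ->
  0 < sigma_min A ->
  (exists x : 'cV[R]_n, A *m x = b) ->
  is_pinv A Adag ->
  finset.partition Pr [set: 'I_m] ->
  finset.partition Pc [set: 'I_n] ->
  0 < alpha ->
  alpha < 2 / (#|Pc|%:R * beta A Pr Pc) ->
  forall k : nat,
    expected_sq_err A b alpha Pr Pc x0 (Adag *m b) k
    <= (1 - (2 * alpha - #|Pc|%:R * beta A Pr Pc * alpha ^+ 2)
              * sigma_min A ^+ 2 / frob A ^+ 2) ^+ k
       * vnorm (x0 - Adag *m b) ^+ 2.
Proof.
(* Full column rank follows from [0 < sigma_min A], and of the Penrose conditions
   only [A A^+ A = A] is needed, to see that [A^+ b] solves the system. *)
move=> _ sigma_gt0 [x1 Ax1] [AXA _ _ _] Pr_part Pc_part alpha_gt0 alpha_lt k.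
have Axs : A *m (Adag *m b) = b by rewrite -Ax1 !mulmxA AXA.
apply: expected_sq_err_geometric => x.
exact: dsbgs_contraction.
Qed.
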